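(* Suppose $X$ has well-defined scattered $\Pi_1$-products. If $A$ is a homotopy cut-set for paths $\alpha,\beta:[0,1]\to X$, then there is a homotopy cut-set $B\subseteq A$ for $\alpha$ and $\beta$ such that $\alpha(B\cap(0,1))=\beta(B\cap(0,1))\subseteq\mathbf{aw}(X)$.
   Context: $\simeq$ is path-homotopy. A loop is trivial if path-homotopic to a constant loop. A sequence of loops $\alpha_n$ based at $x$ is a null-sequence if every neighborhood of $x$ contains $\alpha_n([0,1])$ for all but finitely many $n$. $\mathbf{aw}(X)=\{x\in X\mid \text{there is a null-sequence of non-trivial loops based at }x\}$. For paths $\alpha,\beta:[s,t]\to X$, a set $A\subseteq[s,t]$ is a homotopy cut-set for $\alpha,\beta$ if $A$ is closed, nowhere dense, contains $\{s,t\}$, $\alpha|_A=\beta|_A$, and $\alpha|_{[a,b]}\simeq\beta|_{[a,b]}$ for every component $(a,b)$ of $[s,t]\setminus A$. $X$ has well-defined scattered $\Pi_1$-products if any two paths $[0,1]\to X$ that admit a scattered homotopy cut-set are path-homotopic. *)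

From Stdlib Require Import Reals.
Open Scope R_scope.

Record TopSpace := {
  pt :> Type;
  is_open : (pt -> Prop) -> Prop;
  open_full : is_open (fun _ => True);
  open_inter : forall U V, is_open U -> is_open V -> is_open (fun x => U x /\ V x);
  open_union : forall (F : (pt -> Prop) -> Prop),
      (forall U, F U -> is_open U) -> is_open (fun x => exists U, F U /\ U x)
}.

Definition cont_on {X : TopSpace} (f : R -> X) (D : R -> Prop) : Prop :=
  forall U, is_open X U -> forall x, D x -> U (f x) ->
    exists d, 0 < d /\ forall y, D y -> Rabs (y - x) < d -> U (f y).

Definition cont_on2 {X : TopSpace} (H : R -> R -> X) (D : R -> R -> Prop) : Prop :=
  forall U, is_open X U -> forall x u, D x u -> U (H x u) ->
    exists d, 0 < d /\ forall y v, D y v -> Rabs (y - x) < d -> Rabs (v - u) < d ->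
      U (H y v).

Definition interval (s t : R) : R -> Prop := fun x => s <= x <= t.

(** A path [s,t] -> X, represented by a function R -> X (only values on [s,t] matter). *)
Definition is_path {X : TopSpace} (a : R -> X) (s t : R) : Prop :=
  s <= t /\ cont_on a (interval s t).

Definition path_homotopic {X : TopSpace} (a b : R -> X) (s t : R) : Prop :=
  exists H : R -> R -> X,
    cont_on2 H (fun x u => s <= x <= t /\ 0 <= u <= 1) /\
    (forall x, s <= x <= t -> H x 0 = a x /\ H x 1 = b x) /\
    (forall u, 0 <= u <= 1 -> H s u = a s /\ H t u = a t).

Definition is_loop {X : TopSpace} (a : R -> X) (x : X) : Prop :=
  is_path a 0 1 /\ a 0 = x /\ a 1 = x.

Definition trivial_loop {X : TopSpace} (a : R -> X) : Prop :=
  path_homotopic a (fun _ => a 0) 0 1.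

Definition null_sequence {X : TopSpace} (al : nat -> R -> X) (x : X) : Prop :=
  (forall n, is_loop (al n) x) /\
  forall U, is_open X U -> U x ->
    exists N, forall n, (N <= n)%nat -> forall r, 0 <= r <= 1 -> U (al n r).

Definition aw (X : TopSpace) : X -> Prop :=
  fun x => exists al : nat -> R -> X,
    null_sequence al x /\ forall n, ~ trivial_loop (al n).

Definition closure_R (A : R -> Prop) : R -> Prop :=
  fun x => forall e, 0 < e -> exists y, A y /\ Rabs (y - x) < e.

Definition closed_R (A : R -> Prop) : Prop := forall x, closure_R A x -> A x.

Definition nowhere_dense (A : R -> Prop) : Prop :=
  ~ (exists x e, 0 < e /\ forall y, Rabs (y - x) < e -> closure_R A y).

Definition scattered (A : R -> Prop) : Prop :=
  forall Y : R -> Prop, (forall y, Y y -> A y) -> (exists y, Y y) ->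
    exists y, Y y /\ exists e, 0 < e /\ forall z, Y z -> Rabs (z - y) < e -> z = y.

(** C is a connected component of S (subsets of R; connected = interval). *)
Definition is_component (S C : R -> Prop) : Prop :=
  (exists x, C x) /\ (forall x, C x -> S x) /\
  (forall x y z, C x -> C z -> x <= y <= z -> C y) /\
  (forall C' : R -> Prop,
     (forall x, C x -> C' x) -> (forall x, C' x -> S x) ->
     (forall x y z, C' x -> C' z -> x <= y <= z -> C' y) ->
     forall x, C' x -> C x).

Definition htpy_cut_set {X : TopSpace} (a b : R -> X) (s t : R) (A : R -> Prop) : Prop :=
  (forall x, A x -> s <= x <= t) /\
  closed_R A /\ nowhere_dense A /\ A s /\ A t /\
  (forall x, A x -> a x = b x) /\
  (forall c d, c < d ->
     is_component (fun x => s <= x <= t /\ ~ A x) (fun x => c < x < d) ->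
     path_homotopic a b c d).

Definition well_defined_scattered_products (X : TopSpace) : Prop :=
  forall a b : R -> X, is_path a 0 1 -> is_path b 0 1 ->
    (exists A, scattered A /\ htpy_cut_set a b 0 1 A) ->
    path_homotopic a b 0 1.

Definition image {X : TopSpace} (f : R -> X) (D : R -> Prop) : X -> Prop :=
  fun y => exists x, D x /\ f x = y.

From Stdlib Require Import Reals Lra Lia Classical ClassicalEpsilon.
Open Scope R_scope.

(* Let B consist of the essential points of A: a point t is discarded when
   0 < t < 1 and, for some eps > 0, a and b are path-homotopic on [e, f] for all
   e <= f in A near t.  Inessential points form a relatively open subset of A, so B
   is closed, and as a subset of A it is nowhere dense and a = b on it.  On a
   component (c, d) of [0,1] \ B all points of A are inessential; a supremum
   argument yields homotopies between any two points of A inside (c, d), and these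
   extend to the endpoints either across a gap of A or along a monotone sequence of
   points of A converging to the endpoint, where the scattered cut-set
   {z_n} U {lim z_n} and the well-defined scattered products apply.  Finally, if t is
   in B and a(t) is not in aw(X), then a ~ b on [e, t] and on [t, f] for all e, f in A
   close to t, since otherwise the loops b^-1 . a over [e_n, t] would form a
   null-sequence of non-trivial loops; cancelling in the fundamental groupoid then
   shows that t is inessential. *)

Ltac solve_abs :=
  unfold Rabs in *;
  repeat match goal with
  | |- context [Rcase_abs ?x] => destruct (Rcase_abs x)
  | H : context [Rcase_abs ?x] |- _ => destruct (Rcase_abs x)
  end; lra.

(* [continuous2 (fun x _ => f x)] expresses the continuity of [f]. *)
Definition continuous2 (f : R -> R -> R) : Prop :=
  forall x u e, 0 < e -> exists d, 0 < d /\ forall y v,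
    Rabs (y - x) < d -> Rabs (v - u) < d -> Rabs (f y v - f x u) < e.

Lemma continuous2_const c : continuous2 (fun _ _ => c).
Proof. intros x u e He; exists 1; split; [lra | intros; solve_abs]. Qed.

Lemma continuous2_fst : continuous2 (fun x _ => x).
Proof. intros x u e He; exists e; split; [lra | intros; solve_abs]. Qed.

Lemma continuous2_snd : continuous2 (fun _ u => u).
Proof. intros x u e He; exists e; split; [lra | intros; solve_abs]. Qed.

Lemma continuous2_opp f : continuous2 f -> continuous2 (fun x u => - f x u).
Proof.
  intros Hf x u e He; destruct (Hf x u e He) as [d [Hd H]].
  exists d; split; [exact Hd |]; intros y v Hy Hv; specialize (H y v Hy Hv); solve_abs.
Qed.

Lemma continuous2_binop (op : R -> R -> R) f g :
  (forall p q e, 0 < e -> exists e', 0 < e' /\ forall p' q',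
     Rabs (p' - p) < e' -> Rabs (q' - q) < e' -> Rabs (op p' q' - op p q) < e) ->
  continuous2 f -> continuous2 g -> continuous2 (fun x u => op (f x u) (g x u)).
Proof.
  intros Hop Hf Hg x u e He.
  destruct (Hop (f x u) (g x u) e He) as [e' [He' Ke]].
  destruct (Hf x u e' He') as [d1 [Hd1 H1]].
  destruct (Hg x u e' He') as [d2 [Hd2 H2]].
  exists (Rmin d1 d2); split; [apply Rmin_glb_lt; lra |]; intros y v Hy Hv.
  pose proof (Rmin_l d1 d2); pose proof (Rmin_r d1 d2).
  apply Ke; [apply H1 | apply H2]; lra.
Qed.

Lemma continuous2_plus f g :
  continuous2 f -> continuous2 g -> continuous2 (fun x u => f x u + g x u).
Proof.
  apply continuous2_binop; intros p q e He; exists (e / 2); split; [lra | intros; solve_abs].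
Qed.

Lemma continuous2_minus f g :
  continuous2 f -> continuous2 g -> continuous2 (fun x u => f x u - g x u).
Proof. intros; apply continuous2_plus, continuous2_opp; assumption. Qed.

Lemma continuous2_min f g :
  continuous2 f -> continuous2 g -> continuous2 (fun x u => Rmin (f x u) (g x u)).
Proof.
  apply continuous2_binop; intros p q e He; exists e; split; [lra |].
  intros; unfold Rmin; repeat destruct Rle_dec; solve_abs.
Qed.

Lemma continuous2_max f g :
  continuous2 f -> continuous2 g -> continuous2 (fun x u => Rmax (f x u) (g x u)).
Proof.
  apply continuous2_binop; intros p q e He; exists e; split; [lra |].
  intros; unfold Rmax; repeat destruct Rle_dec; solve_abs.
Qed.

Lemma continuous2_mult f g :
  continuous2 f -> continuous2 g -> continuous2 (fun x u => f x u * g x u).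
Proof.
  apply continuous2_binop; intros p q e He.
  set (P := Rabs p + 1); set (Q := Rabs q + 1).
  assert (HP : 1 <= P) by (unfold P; pose proof (Rabs_pos p); lra).
  assert (HQ : 1 <= Q) by (unfold Q; pose proof (Rabs_pos q); lra).
  exists (Rmin 1 (e / (2 * P * Q))); split.
  { apply Rmin_glb_lt; [lra | apply Rdiv_lt_0_compat; nra]. }
  intros p' q' Hp Hq.
  assert (Hm : Rmin 1 (e / (2 * P * Q)) * (2 * P * Q) <= e).
  { pose proof (Rmin_r 1 (e / (2 * P * Q))).
    apply Rle_trans with (e / (2 * P * Q) * (2 * P * Q)); [apply Rmult_le_compat_r; nra |].
    right; field; nra. }
  pose proof (Rmin_l 1 (e / (2 * P * Q))).
  replace (p' * q' - p * q) with (p' * (q' - q) + q * (p' - p)) by ring.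
  eapply Rle_lt_trans; [apply Rabs_triang |]; rewrite !Rabs_mult.
  assert (Hp' : Rabs p' <= P).
  { unfold P; replace p' with (p + (p' - p)) by ring.
    eapply Rle_trans; [apply Rabs_triang | lra]. }
  pose proof (Rabs_pos p'); pose proof (Rabs_pos q); pose proof (Rabs_pos (q' - q));
    pose proof (Rabs_pos (p' - p)).
  assert (Rabs q <= Q) by (unfold Q; lra).
  set (m := Rmin 1 (e / (2 * P * Q))) in *.
  assert (Rabs p' * Rabs (q' - q) <= P * m) by (apply Rmult_le_compat; lra).
  assert (Rabs q * Rabs (p' - p) < Q * m) by (apply Rle_lt_trans with (Q * Rabs (p' - p)); nra).
  assert (0 <= m) by (pose proof (Rabs_pos (p' - p)); lra).
  assert (P + Q <= 2 * P * Q) by nra.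
  assert ((P + Q) * m <= 2 * P * Q * m) by (apply Rmult_le_compat_r; lra).
  lra.
Qed.

Ltac continuity2 :=
  repeat first
    [ apply continuous2_const | apply continuous2_fst | apply continuous2_snd
    | apply continuous2_plus | apply continuous2_minus | apply continuous2_mult
    | apply continuous2_opp | apply continuous2_min | apply continuous2_max ].

Section Continuity.
Context {X : TopSpace}.

Lemma cont_on_subset (f : R -> X) (D D' : R -> Prop) :
  cont_on f D -> (forall x, D' x -> D x) -> cont_on f D'.
Proof.
  intros Hf HD U HU x Hx Hux; destruct (Hf U HU x (HD x Hx) Hux) as [d [Hd K]].
  exists d; split; auto.
Qed.

Lemma cont_on2_subset (H : R -> R -> X) (D D' : R -> R -> Prop) :
  cont_on2 H D -> (forall x u, D' x u -> D x u) -> cont_on2 H D'.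
Proof.
  intros Hf HD U HU x u Hx Hux; destruct (Hf U HU x u (HD x u Hx) Hux) as [d [Hd K]].
  exists d; split; auto.
Qed.

Lemma cont_on_ext (f g : R -> X) (D : R -> Prop) :
  cont_on f D -> (forall x, D x -> f x = g x) -> cont_on g D.
Proof.
  intros Hf E U HU x Hx Hux; rewrite <- E in Hux by exact Hx.
  destruct (Hf U HU x Hx Hux) as [d [Hd K]].
  exists d; split; [exact Hd |]; intros y Hy Hyx; rewrite <- E; auto.
Qed.

Lemma cont_on2_const (c : X) (D : R -> R -> Prop) : cont_on2 (fun _ _ => c) D.
Proof. intros U HU x u Hx Hc; exists 1; split; [lra | auto]. Qed.

Lemma cont_on_comp (f : R -> X) (phi : R -> R) (D D' : R -> Prop) :
  cont_on f D -> continuous2 (fun x _ => phi x) -> (forall x, D' x -> D (phi x)) ->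
  cont_on (fun x => f (phi x)) D'.
Proof.
  intros Hf Hp HD U HU x Hx Hux.
  destruct (Hf U HU (phi x) (HD x Hx) Hux) as [d [Hd K]].
  destruct (Hp x 0 d Hd) as [d' [Hd' K']].
  exists d'; split; [exact Hd' |]; intros y Hy Hyx; apply K; [auto |].
  apply (K' y 0); [exact Hyx | rewrite Rminus_0_r, Rabs_R0; exact Hd'].
Qed.

Lemma cont_on_comp2 (f : R -> X) (phi : R -> R -> R) (D : R -> Prop) (D' : R -> R -> Prop) :
  cont_on f D -> continuous2 phi -> (forall x u, D' x u -> D (phi x u)) ->
  cont_on2 (fun x u => f (phi x u)) D'.
Proof.
  intros Hf Hp HD U HU x u Hx Hux.
  destruct (Hf U HU (phi x u) (HD x u Hx) Hux) as [d [Hd K]].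
  destruct (Hp x u d Hd) as [d' [Hd' K']].
  exists d'; split; [exact Hd' |]; intros y v Hy Hyx Hv; apply K; auto.
Qed.

Lemma cont_on2_comp (H : R -> R -> X) (p q : R -> R -> R) (D D' : R -> R -> Prop) :
  cont_on2 H D -> continuous2 p -> continuous2 q -> (forall x u, D' x u -> D (p x u) (q x u)) ->
  cont_on2 (fun x u => H (p x u) (q x u)) D'.
Proof.
  intros Hf Hp Hq HD U HU x u Hx Hux.
  destruct (Hf U HU (p x u) (q x u) (HD x u Hx) Hux) as [d [Hd K]].
  destruct (Hp x u d Hd) as [d1 [Hd1 K1]].
  destruct (Hq x u d Hd) as [d2 [Hd2 K2]].
  exists (Rmin d1 d2); split; [apply Rmin_glb_lt; lra |]; intros y v Hy Hyx Hv.
  pose proof (Rmin_l d1 d2); pose proof (Rmin_r d1 d2).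
  apply K; [auto | apply K1 | apply K2]; lra.
Qed.

Lemma cont_on_of_cont_on2 (H : R -> R -> X) (p q : R -> R) (D : R -> R -> Prop) (D' : R -> Prop) :
  cont_on2 H D -> continuous2 (fun x _ => p x) -> continuous2 (fun x _ => q x) ->
  (forall x, D' x -> D (p x) (q x)) ->
  cont_on (fun x => H (p x) (q x)) D'.
Proof.
  intros Hf Hp Hq HD.
  assert (K := cont_on2_comp H (fun x _ => p x) (fun x _ => q x) D (fun x _ => D' x) Hf Hp Hq
                 (fun x _ Hx => HD x Hx)).
  intros U HU x Hx Hux; destruct (K U HU x 0 Hx Hux) as [d [Hd Kd]].
  exists d; split; [exact Hd |]; intros y Hy Hyx; apply (Kd y 0); auto.
  rewrite Rminus_0_r, Rabs_R0; exact Hd.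
Qed.

Lemma cont_on2_glue (H1 H2 : R -> R -> X) (D : R -> R -> Prop) m :
  cont_on2 H1 (fun x u => D x u /\ x <= m) -> cont_on2 H2 (fun x u => D x u /\ m <= x) ->
  (forall u, D m u -> H1 m u = H2 m u) ->
  cont_on2 (fun x u => if Rle_dec x m then H1 x u else H2 x u) D.
Proof.
  intros C1 C2 E U HU x u Hx Hux.
  destruct (Rlt_le_dec x m) as [Hxm | Hmx]; [| destruct (Req_dec x m) as [-> | Hxm]].
  - destruct (Rle_dec x m) as [_ | Nx]; [| lra].
    destruct (C1 U HU x u (conj Hx (Rlt_le _ _ Hxm)) Hux) as [d [Hd K]].
    exists (Rmin d (m - x)); split; [apply Rmin_glb_lt; lra |]; intros y v Hy Hyx Hv.
    pose proof (Rmin_l d (m - x)); pose proof (Rmin_r d (m - x)).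
    destruct (Rle_dec y m); [apply K; [split |..]; auto; lra | solve_abs].
  - destruct (Rle_dec m m) as [_ | Nm]; [| lra].
    destruct (C1 U HU m u (conj Hx (Rle_refl m)) Hux) as [d1 [Hd1 K1]].
    rewrite E in Hux by exact Hx.
    destruct (C2 U HU m u (conj Hx (Rle_refl m)) Hux) as [d2 [Hd2 K2]].
    exists (Rmin d1 d2); split; [apply Rmin_glb_lt; lra |]; intros y v Hy Hyx Hv.
    pose proof (Rmin_l d1 d2); pose proof (Rmin_r d1 d2).
    destruct (Rle_dec y m); [apply K1 | apply K2]; try split; auto; lra.
  - destruct (Rle_dec x m) as [Nx | _]; [lra |].
    destruct (C2 U HU x u (conj Hx Hmx) Hux) as [d [Hd K]].
    exists (Rmin d (x - m)); split; [apply Rmin_glb_lt; lra |]; intros y v Hy Hyx Hv.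
    pose proof (Rmin_l d (x - m)); pose proof (Rmin_r d (x - m)).
    destruct (Rle_dec y m); [solve_abs | apply K; [split |..]; auto; lra].
Qed.

Lemma cont_on2_swap (H : R -> R -> X) (D : R -> R -> Prop) :
  cont_on2 H D -> cont_on2 (fun u x => H x u) (fun u x => D x u).
Proof.
  intros C U HU u x Hx Hux; destruct (C U HU x u Hx Hux) as [d [Hd K]].
  exists d; split; [exact Hd |]; intros; apply K; auto.
Qed.

Lemma cont_on2_glue_snd (H1 H2 : R -> R -> X) (D : R -> R -> Prop) m :
  cont_on2 H1 (fun x u => D x u /\ u <= m) -> cont_on2 H2 (fun x u => D x u /\ m <= u) ->
  (forall x, D x m -> H1 x m = H2 x m) ->
  cont_on2 (fun x u => if Rle_dec u m then H1 x u else H2 x u) D.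
Proof.
  intros C1 C2 E; apply cont_on2_swap in C1, C2.
  exact (cont_on2_swap _ _
    (cont_on2_glue (fun u x => H1 x u) (fun u x => H2 x u) (fun u x => D x u) m C1 C2 E)).
Qed.

Lemma cont_on_glue (f1 f2 : R -> X) (D : R -> Prop) m :
  cont_on f1 (fun x => D x /\ x <= m) -> cont_on f2 (fun x => D x /\ m <= x) ->
  (D m -> f1 m = f2 m) ->
  cont_on (fun x => if Rle_dec x m then f1 x else f2 x) D.
Proof.
  intros C1 C2 E.
  assert (G : cont_on2 (fun x (_ : R) => if Rle_dec x m then f1 x else f2 x) (fun x _ => D x)).
  { apply (cont_on2_glue (fun x _ => f1 x) (fun x _ => f2 x) (fun x _ => D x) m); [| | auto].
    - exact (cont_on_comp2 f1 (fun x _ => x) _ _ C1 continuous2_fst (fun x _ Hx => Hx)).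
    - exact (cont_on_comp2 f2 (fun x _ => x) _ _ C2 continuous2_fst (fun x _ Hx => Hx)). }
  exact (cont_on_of_cont_on2 _ (fun x => x) (fun _ => 0) _ D G continuous2_fst
           (continuous2_const 0) (fun x Hx => Hx)).
Qed.

End Continuity.

Section Homotopy.
Context {X : TopSpace}.

Lemma path_homotopic_endpoints (a b : R -> X) s t :
  path_homotopic a b s t -> s <= t -> a s = b s /\ a t = b t.
Proof.
  intros [H [_ [E1 E2]]] Hst.
  destruct (E1 s ltac:(lra)) as [_ B1], (E1 t ltac:(lra)) as [_ B2], (E2 1 ltac:(lra)) as [A1 A2].
  split; congruence.
Qed.

Lemma path_homotopic_cont (a b : R -> X) s t :
  path_homotopic a b s t -> s <= t -> cont_on a (interval s t) /\ cont_on b (interval s t).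
Proof.
  intros [H [C [E1 _]]] Hst.
  assert (Hu : forall u, 0 <= u <= 1 -> cont_on (fun x => H x u) (interval s t)).
  { intros u Hu; apply (cont_on_of_cont_on2 H (fun x => x) (fun _ => u) _ _ C);
      [continuity2 | continuity2 | intros x Hx; split; [exact Hx | exact Hu]]. }
  split; [apply (cont_on_ext _ _ _ (Hu 0 ltac:(lra))) | apply (cont_on_ext _ _ _ (Hu 1 ltac:(lra)))];
    intros x Hx; apply E1, Hx.
Qed.

Lemma path_homotopic_point (a b : R -> X) t : a t = b t -> path_homotopic a b t t.
Proof.
  intros E; exists (fun _ _ => a t); split; [apply cont_on2_const |]; split.
  - intros x Hx; replace x with t by lra; auto.
  - auto.
Qed.

Lemma path_homotopic_ext (a b a' b' : R -> X) s t :
  path_homotopic a b s t -> s <= t ->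
  (forall x, s <= x <= t -> a x = a' x /\ b x = b' x) -> path_homotopic a' b' s t.
Proof.
  intros [H [C [E1 E2]]] Hst E; exists H; split; [exact C |]; split.
  - intros x Hx; destruct (E x Hx), (E1 x Hx); split; congruence.
  - intros u Hu; destruct (E s ltac:(lra)), (E t ltac:(lra)), (E2 u Hu); split; congruence.
Qed.

Lemma path_homotopic_refl (a : R -> X) s t : cont_on a (interval s t) -> path_homotopic a a s t.
Proof.
  intros C; exists (fun x _ => a x); split; [| split; auto].
  apply (cont_on_comp2 a (fun x _ => x) (interval s t)); [exact C | continuity2 |].
  intros x u [Hx _]; exact Hx.
Qed.

Lemma path_homotopic_sym (a b : R -> X) s t :
  path_homotopic a b s t -> s <= t -> path_homotopic b a s t.
Proof.
  intros Hh Hst; destruct (path_homotopic_endpoints a b s t Hh Hst) as [Es Et].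
  destruct Hh as [H [C [E1 E2]]]; exists (fun x u => H x (1 - u)); split; [| split].
  - apply (cont_on2_comp H (fun x _ => x) (fun _ u => 1 - u) _ _ C); [continuity2 | continuity2 |].
    intros x u [Hx Hu]; split; lra.
  - intros x Hx; rewrite Rminus_0_r, Rminus_diag; destruct (E1 x Hx); split; auto.
  - intros u Hu; destruct (E2 (1 - u) ltac:(lra)); split; congruence.
Qed.

Lemma path_homotopic_trans (a b c : R -> X) s t :
  path_homotopic a b s t -> path_homotopic b c s t -> s <= t -> path_homotopic a c s t.
Proof.
  intros H1h H2h Hst; destruct (path_homotopic_endpoints a b s t H1h Hst) as [Es Et].
  destruct H1h as [H1 [C1 [E11 E12]]], H2h as [H2 [C2 [E21 E22]]].
  exists (fun x u => if Rle_dec u (1/2) then H1 x (2 * u) else H2 x (2 * u - 1)); split; [| split].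
  - apply cont_on2_glue_snd.
    + apply (cont_on2_comp H1 (fun x _ => x) (fun _ u => 2 * u) _ _ C1); [continuity2 | continuity2 |].
      intros x u [[Hx Hu] Hm]; split; lra.
    + apply (cont_on2_comp H2 (fun x _ => x) (fun _ u => 2 * u - 1) _ _ C2);
        [continuity2 | continuity2 |].
      intros x u [[Hx Hu] Hm]; split; lra.
    + intros x [Hx _]; replace (2 * (1/2) - 1) with 0 by field; replace (2 * (1/2)) with 1 by field.
      destruct (E11 x Hx), (E21 x Hx); congruence.
  - intros x Hx; destruct (Rle_dec 0 (1/2)); [| lra]; destruct (Rle_dec 1 (1/2)); [lra |].
    replace (2 * 0) with 0 by ring; replace (2 * 1 - 1) with 1 by ring.
    destruct (E11 x Hx), (E21 x Hx); split; auto.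
  - intros u Hu; destruct (Rle_dec u (1/2)); [apply E12; lra |].
    destruct (E22 (2 * u - 1) ltac:(lra)); split; congruence.
Qed.

Lemma path_homotopic_concat (a b : R -> X) s m t :
  s <= m -> m <= t -> path_homotopic a b s m -> path_homotopic a b m t -> path_homotopic a b s t.
Proof.
  intros Hsm Hmt [H1 [C1 [E11 E12]]] [H2 [C2 [E21 E22]]].
  exists (fun x u => if Rle_dec x m then H1 x u else H2 x u); split; [| split].
  - apply cont_on2_glue.
    + apply (cont_on2_subset H1 _ _ C1); intros x u [[Hx Hu] Hm]; split; lra.
    + apply (cont_on2_subset H2 _ _ C2); intros x u [[Hx Hu] Hm]; split; lra.
    + intros u [_ Hu]; destruct (E12 u Hu), (E22 u Hu); congruence.
  - intros x Hx; destruct (Rle_dec x m); [apply E11 | apply E21]; lra.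
  - intros u Hu; destruct (Rle_dec s m); [| lra]; destruct (Rle_dec t m).
    + replace t with m by lra; apply E12, Hu.
    + destruct (E12 u Hu), (E22 u Hu); split; auto.
Qed.

(* Straight-line homotopy in the parameter interval. *)
Lemma path_homotopic_reparam (f : R -> X) (phi psi : R -> R) p q s t :
  cont_on f (interval p q) -> continuous2 (fun x _ => phi x) -> continuous2 (fun x _ => psi x) ->
  (forall x, s <= x <= t -> p <= phi x <= q /\ p <= psi x <= q) ->
  phi s = psi s -> phi t = psi t ->
  path_homotopic (fun x => f (phi x)) (fun x => f (psi x)) s t.
Proof.
  intros C Hp Hq Rg E1 E2; exists (fun x u => f ((1 - u) * phi x + u * psi x)); split; [| split].
  - apply (cont_on_comp2 f (fun x u => (1 - u) * phi x + u * psi x) (interval p q)); [exact C | |].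
    + apply continuous2_plus; apply continuous2_mult; try continuity2; assumption.
    + intros x u [Hx Hu]; destruct (Rg x Hx) as [[A1 A2] [A3 A4]]; unfold interval; split; nra.
  - intros x Hx; split; f_equal; ring.
  - intros u Hu; split; f_equal; [rewrite E1 | rewrite E2]; ring.
Qed.

Lemma path_homotopic_precomp (a b : R -> X) (lam : R -> R) p q s t :
  path_homotopic a b p q -> continuous2 (fun x _ => lam x) ->
  (forall x, s <= x <= t -> p <= lam x <= q) -> lam s = p -> lam t = q ->
  path_homotopic (fun x => a (lam x)) (fun x => b (lam x)) s t.
Proof.
  intros [H [C [E1 E2]]] Hl Rg Es Et; exists (fun x u => H (lam x) u); split; [| split].
  - apply (cont_on2_comp H (fun x _ => lam x) (fun _ u => u) _ _ C); [exact Hl | continuity2 |].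
    intros x u [Hx Hu]; split; auto.
  - intros x Hx; apply E1; auto.
  - intros u Hu; rewrite Es, Et; apply E2, Hu.
Qed.

Lemma path_homotopic_of_rescaled (a b : R -> X) s t : s < t ->
  path_homotopic (fun x => a (s + x * (t - s))) (fun x => b (s + x * (t - s))) 0 1 ->
  path_homotopic a b s t.
Proof.
  intros Hst Hh.
  assert (K : path_homotopic (fun y => a (s + (y - s) / (t - s) * (t - s)))
                             (fun y => b (s + (y - s) / (t - s) * (t - s))) s t).
  { apply (path_homotopic_precomp _ _ (fun y => (y - s) / (t - s)) 0 1 s t Hh).
    - unfold Rdiv; continuity2.
    - intros x Hx; split; [apply Rmult_le_pos | apply Rmult_le_reg_r with (t - s)]; try lra;
        [left; apply Rinv_0_lt_compat; lra | field_simplify; lra].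
    - field; lra.
    - field; lra. }
  apply (path_homotopic_ext _ _ _ _ s t K ltac:(lra)).
  intros x _; replace (s + (x - s) / (t - s) * (t - s)) with x by (field; lra); auto.
Qed.

Lemma path_homotopic_reflect (a b : R -> X) s t :
  path_homotopic a b s t -> path_homotopic (fun x => a (- x)) (fun x => b (- x)) (- t) (- s).
Proof.
  intros [H [C [E1 E2]]]; exists (fun x u => H (- x) u); split; [| split].
  - apply (cont_on2_comp H (fun x _ => - x) (fun _ u => u) _ _ C); [continuity2 | continuity2 |].
    intros x u [Hx Hu]; split; [lra | exact Hu].
  - intros x Hx; apply E1; lra.
  - intros u Hu; rewrite !Ropp_involutive; destruct (E2 u Hu); split; auto.
Qed.

Lemma path_homotopic_of_reflect (a b : R -> X) s t :
  path_homotopic (fun x => a (- x)) (fun x => b (- x)) (- t) (- s) -> s <= t ->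
  path_homotopic a b s t.
Proof.
  intros Hh Hst; apply path_homotopic_reflect in Hh; rewrite !Ropp_involutive in Hh.
  apply (path_homotopic_ext _ _ _ _ s t Hh Hst); intros; rewrite !Ropp_involutive; auto.
Qed.

End Homotopy.

Section Cancellation.
Context {X : TopSpace}.

Lemma path_homotopic_transport (c d : R -> X) (phi psi : R -> R) p q s t :
  cont_on c (interval p q) -> cont_on d (interval p q) ->
  continuous2 (fun x _ => phi x) -> continuous2 (fun x _ => psi x) ->
  (forall x, s <= x <= t -> p <= phi x <= q /\ p <= psi x <= q) ->
  phi s = psi s -> phi t = psi t -> s <= t ->
  path_homotopic (fun x => c (phi x)) (fun x => d (phi x)) s t ->
  path_homotopic (fun x => c (psi x)) (fun x => d (psi x)) s t.
Proof.
  intros Cc Cd Hphi Hpsi Rg Es Et Hst Hh.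
  assert (Rg' : forall x, s <= x <= t -> p <= psi x <= q /\ p <= phi x <= q)
    by (intros x Hx; destruct (Rg x Hx); split; assumption).
  apply path_homotopic_trans with (fun x => c (phi x)); [| | exact Hst].
  - exact (path_homotopic_reparam c psi phi p q s t Cc Hpsi Hphi Rg' (eq_sym Es) (eq_sym Et)).
  - apply path_homotopic_trans with (fun x => d (phi x)); [exact Hh | | exact Hst].
    exact (path_homotopic_reparam d phi psi p q s t Cd Hphi Hpsi Rg Es Et).
Qed.

(* Run through [x, t] and back to [y] (the map [rho] below); this is homotopic to
   running through [x, y] since [c] and [d] agree on the return leg. *)
Lemma path_homotopic_restrict_left (c d : R -> X) x y t : x <= y -> y <= t ->
  path_homotopic c d x t -> (forall z, y <= z <= t -> c z = d z) -> path_homotopic c d x y.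
Proof.
  intros Hxy Hyt Hh Eq.
  destruct (Req_dec x y) as [<- | Nxy].
  { apply path_homotopic_point; apply (path_homotopic_endpoints c d x t Hh); lra. }
  destruct (path_homotopic_cont c d x t Hh ltac:(lra)) as [Cc Cd].
  set (T := 2 * t - y); set (rho := fun z => Rmin z (2 * t - z)).
  set (lam := fun z => x + (z - x) * ((T - x) / (y - x))).
  assert (Hrho : continuous2 (fun z _ => rho z)) by (unfold rho; continuity2).
  assert (Rrho : forall z, x <= z <= T -> x <= rho z <= t)
    by (intros z Hz; unfold rho, T in *; unfold Rmin; destruct Rle_dec; lra).
  assert (Hk : (T - x) / (y - x) * (y - x) = T - x) by (field; lra).
  assert (Hk0 : 0 <= (T - x) / (y - x)) by (apply Rlt_le, Rdiv_lt_0_compat; unfold T; lra).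
  assert (Rlam : forall z, x <= z <= y -> x <= lam z <= T) by (intros z Hz; unfold lam; split; nra).
  assert (S1 : path_homotopic (fun z => c (rho z)) (fun z => d (rho z)) x T).
  { apply path_homotopic_concat with t; [lra | unfold T; lra | |].
    - apply (path_homotopic_ext c d _ _ x t Hh ltac:(lra)).
      intros z Hz; unfold rho; rewrite Rmin_left by lra; auto.
    - apply (path_homotopic_ext (fun z => c (rho z)) (fun z => c (rho z)) _ _ t T);
        [| unfold T; lra |].
      + apply path_homotopic_refl, (cont_on_comp c rho (interval x t)); [exact Cc | exact Hrho |].
        intros z Hz; unfold interval in *; apply Rrho; unfold T in *; lra.
      + intros z Hz; split; [reflexivity |]; apply Eq.
        unfold rho, T in *; rewrite Rmin_right by lra; lra. }
  assert (S2 : path_homotopic (fun z => c (rho (lam z))) (fun z => d (rho (lam z))) x y).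
  { apply (path_homotopic_precomp _ _ lam x T x y S1); [unfold lam; continuity2 | exact Rlam | |].
    - unfold lam; ring.
    - unfold lam; rewrite Rmult_comm, Hk; ring. }
  apply (path_homotopic_transport c d (fun z => rho (lam z)) (fun z => z) x t x y Cc Cd);
    [unfold rho, lam; continuity2 | continuity2 | | | | exact Hxy | exact S2].
  - intros z Hz; split; [apply Rrho, Rlam, Hz | lra].
  - unfold rho, lam; rewrite Rminus_diag, Rmult_0_l, Rplus_0_r; apply Rmin_left; lra.
  - unfold lam; rewrite Rmult_comm, Hk; unfold rho, T; rewrite Rmin_right; lra.
Qed.

Lemma path_homotopic_restrict_right (c d : R -> X) x y t : x <= y -> y <= t ->
  path_homotopic c d x t -> (forall z, x <= z <= y -> c z = d z) -> path_homotopic c d y t.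
Proof.
  intros Hxy Hyt Hh Eq; apply path_homotopic_reflect in Hh.
  apply path_homotopic_of_reflect; [| exact Hyt].
  apply (path_homotopic_restrict_left _ _ (- t) (- y) (- x)); [lra | lra | exact Hh |].
  intros z Hz; apply Eq; lra.
Qed.

(* Replace [a] by [b] on the piece where they are already known to be homotopic;
   the resulting path agrees with [b] there, so the restriction lemmas apply. *)
Lemma path_homotopic_cancel_left (a b : R -> X) e x f : e <= x -> x <= f ->
  path_homotopic a b e f -> path_homotopic a b e x -> path_homotopic a b x f.
Proof.
  intros Hex Hxf H1 H2.
  destruct (path_homotopic_endpoints a b e x H2 Hex) as [_ Ex].
  destruct (path_homotopic_cont a b e f H1 ltac:(lra)) as [Ca _].
  set (c := fun z => if Rle_dec z x then b z else a z).
  assert (K1 : path_homotopic a c e f).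
  { apply path_homotopic_concat with x; [exact Hex | exact Hxf | |].
    - apply (path_homotopic_ext a b a c e x H2 Hex).
      intros z Hz; unfold c; destruct Rle_dec; [auto | lra].
    - apply (path_homotopic_ext a a a c x f); [| exact Hxf |].
      + apply path_homotopic_refl, (cont_on_subset a _ _ Ca); unfold interval; intros; lra.
      + intros z Hz; unfold c; destruct Rle_dec; [replace z with x by lra |]; auto. }
  assert (K2 : path_homotopic c b x f).
  { apply (path_homotopic_restrict_right c b e x f Hex Hxf).
    - apply path_homotopic_trans with a; [apply path_homotopic_sym | |]; auto; lra.
    - intros z Hz; unfold c; destruct Rle_dec; [auto | lra]. }
  apply (path_homotopic_ext c b a b x f K2 Hxf).
  intros z Hz; unfold c; destruct Rle_dec; [replace z with x by lra |]; auto.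
Qed.

Lemma path_homotopic_cancel_right (a b : R -> X) e x f : e <= x -> x <= f ->
  path_homotopic a b e f -> path_homotopic a b x f -> path_homotopic a b e x.
Proof.
  intros Hex Hxf H1 H2; apply path_homotopic_reflect in H1, H2.
  apply path_homotopic_of_reflect; [| exact Hex].
  apply (path_homotopic_cancel_left _ _ (- f) (- x) (- e)); auto; lra.
Qed.

End Cancellation.

(* [u |-> (square_arc_x u, square_arc_y u)] runs along three sides of the unit square:
   (1,0) -> (1,1) -> (0,1) -> (0,0). *)
Definition square_arc_x (u : R) : R := Rmax 0 (Rmin 1 (2 - 3 * u)).
Definition square_arc_y (u : R) : R := Rmin 1 (Rmin (3 * u) (3 - 3 * u)).

Lemma square_arc_range u : 0 <= u <= 1 ->
  0 <= square_arc_x u <= 1 /\ 0 <= square_arc_y u <= 1.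
Proof. intros; unfold square_arc_x, square_arc_y, Rmax, Rmin; repeat destruct Rle_dec; lra. Qed.

Lemma square_arc_ends :
  square_arc_x 0 = 1 /\ square_arc_y 0 = 0 /\ square_arc_x 1 = 0 /\ square_arc_y 1 = 0.
Proof. unfold square_arc_x, square_arc_y, Rmax, Rmin; repeat destruct Rle_dec; lra. Qed.

Lemma square_arc_sides u : 0 <= u <= 1 ->
  square_arc_x u = 0 \/ square_arc_x u = 1 \/ square_arc_y u = 1.
Proof. intros; unfold square_arc_x, square_arc_y, Rmax, Rmin; repeat destruct Rle_dec; lra. Qed.

Section DifferenceLoop.
Context {X : TopSpace}.

Definition diff_loop (al be : R -> X) (s t : R) : R -> X :=
  fun r => if Rle_dec r (1/2) then be (t - 2 * r * (t - s)) else al (s + (2 * r - 1) * (t - s)).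

Lemma diff_loop_cont (al be : R -> X) s t : s <= t ->
  cont_on al (interval s t) -> cont_on be (interval s t) -> al s = be s ->
  cont_on (diff_loop al be s t) (interval 0 1).
Proof.
  intros Hst Ca Cb E; apply cont_on_glue.
  - apply (cont_on_comp be (fun r => t - 2 * r * (t - s)) (interval s t)); [exact Cb | continuity2 |].
    intros r [Hr Hm]; unfold interval in *; split; nra.
  - apply (cont_on_comp al (fun r => s + (2 * r - 1) * (t - s)) (interval s t));
      [exact Ca | continuity2 |].
    intros r [Hr Hm]; unfold interval in *; split; nra.
  - intros _; replace (t - 2 * (1/2) * (t - s)) with s by field.
    replace (s + (2 * (1/2) - 1) * (t - s)) with s by field; auto.
Qed.

Lemma diff_loop_values (al be : R -> X) s t r : s <= t -> 0 <= r <= 1 ->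
  exists y, s <= y <= t /\ (diff_loop al be s t r = al y \/ diff_loop al be s t r = be y).
Proof.
  intros Hst Hr; unfold diff_loop; destruct Rle_dec.
  - exists (t - 2 * r * (t - s)); split; [nra | right; reflexivity].
  - exists (s + (2 * r - 1) * (t - s)); split; [nra | left; reflexivity].
Qed.

Lemma diff_loop_0 (al be : R -> X) s t : diff_loop al be s t 0 = be t.
Proof. unfold diff_loop; destruct Rle_dec; [f_equal; ring | lra]. Qed.

Lemma diff_loop_1 (al be : R -> X) s t : diff_loop al be s t 1 = al t.
Proof. unfold diff_loop; destruct Rle_dec; [lra | f_equal; ring]. Qed.

Lemma diff_loop_al (al be : R -> X) s t x : 0 <= x <= 1 -> al s = be s ->
  diff_loop al be s t (1/2 + x * (1 - 1/2)) = al (s + x * (t - s)).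
Proof.
  intros Hx E; unfold diff_loop; destruct Rle_dec.
  - replace x with 0 by lra.
    replace (t - 2 * (1/2 + 0 * (1 - 1/2)) * (t - s)) with s by field.
    rewrite Rmult_0_l, Rplus_0_r; symmetry; exact E.
  - f_equal; field.
Qed.

Lemma diff_loop_be (al be : R -> X) s t x :
  diff_loop al be s t (1/2 + x * (0 - 1/2)) = be (s + x * (t - s)) \/ x < 0.
Proof.
  unfold diff_loop; destruct Rle_dec; [left; f_equal; field | right; lra].
Qed.

(* A null-homotopy [H] of the loop, restricted to the three-sided arcs of the squares
   of side [x] whose bottom edge is centred at (1/2, 0), gives [al ~ be]. *)
Lemma path_homotopic_of_trivial_diff_loop (al be : R -> X) s t : s < t ->
  al s = be s -> al t = be t -> trivial_loop (diff_loop al be s t) -> path_homotopic al be s t.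
Proof.
  intros Hst Es Et [H [C [E1 E2]]].
  rewrite diff_loop_0 in E1, E2; rewrite diff_loop_1 in E2.
  apply path_homotopic_of_rescaled; [exact Hst |].
  destruct square_arc_ends as [X0 [Y0 [X1 Y1]]].
  exists (fun x u => H (1/2 + x * (square_arc_x u - 1/2)) (x * square_arc_y u)); split; [| split].
  - apply (cont_on2_comp H _ _ _ _ C);
      [unfold square_arc_x; continuity2 | unfold square_arc_y; continuity2 |].
    intros x u [Hx Hu]; destruct (square_arc_range u Hu); split; nra.
  - intros x Hx; rewrite X0, Y0, X1, Y1, !Rmult_0_r; split.
    + destruct (E1 (1/2 + x * (1 - 1/2)) ltac:(lra)) as [-> _]; apply diff_loop_al; auto.
    + destruct (E1 (1/2 + x * (0 - 1/2)) ltac:(lra)) as [-> _].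
      destruct (diff_loop_be al be s t x) as [-> | N]; [reflexivity | lra].
  - intros u Hu; rewrite !Rmult_0_l, !Rmult_1_l, !Rplus_0_r.
    replace (1/2 + (square_arc_x u - 1/2)) with (square_arc_x u) by ring.
    replace (s + (t - s)) with t by ring.
    split.
    + destruct (E1 (1/2) ltac:(lra)) as [-> _].
      unfold diff_loop; destruct Rle_dec; [| lra].
      replace (t - 2 * (1/2) * (t - s)) with s by field; symmetry; exact Es.
    + destruct (square_arc_range u Hu) as [Rx Ry].
      destruct (square_arc_sides u Hu) as [-> | [-> | ->]].
      * rewrite Et; apply E2, Ry.
      * apply E2, Ry.
      * rewrite Et; apply E1, Rx.
Qed.

End DifferenceLoop.

Lemma inv_INR_S_small (d : R) : 0 < d -> exists N, forall n, (N <= n)%nat -> / INR (S n) < d.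
Proof.
  intros Hd; destruct (archimed_cor1 d Hd) as [N [HN1 HN2]]; exists N; intros n Hn.
  eapply Rle_lt_trans; [| exact HN1].
  apply Rinv_le_contravar; [apply lt_0_INR; lia | apply le_INR; lia].
Qed.

Section WildPoints.
Context {X : TopSpace}.

(* The difference loops of the pairs [al n], [be n] are a null-sequence of
   non-trivial loops at [x0]. *)
Lemma aw_of_nonhomotopic_shrinking (x0 : X) (al be : nat -> R -> X) (s t : nat -> R) :
  (forall n, s n < t n) ->
  (forall n, cont_on (al n) (interval (s n) (t n))) ->
  (forall n, cont_on (be n) (interval (s n) (t n))) ->
  (forall n, al n (s n) = be n (s n)) -> (forall n, al n (t n) = x0 /\ be n (t n) = x0) ->
  (forall n, ~ path_homotopic (al n) (be n) (s n) (t n)) ->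
  (forall U, is_open X U -> U x0 -> exists N, forall n, (N <= n)%nat ->
     forall y, s n <= y <= t n -> U (al n y) /\ U (be n y)) ->
  aw X x0.
Proof.
  intros Hst Ca Cb Es Et Nh Small.
  exists (fun n => diff_loop (al n) (be n) (s n) (t n)); split; [split |].
  - intros n; split; [split; [lra |] |].
    + apply diff_loop_cont; auto; left; auto.
    + rewrite diff_loop_0, diff_loop_1; destruct (Et n); auto.
  - intros U HU Ux; destruct (Small U HU Ux) as [N HN]; exists N; intros n Hn r Hr.
    destruct (diff_loop_values (al n) (be n) (s n) (t n) r ltac:(left; auto) Hr)
      as [y [Hy [-> | ->]]]; apply (HN n Hn y Hy).
  - intros n Ht; apply (Nh n), path_homotopic_of_trivial_diff_loop; auto.
    destruct (Et n) as [E1 E2]; congruence.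
Qed.

Lemma aw_of_nonhomotopic_left (a b : R -> X) s t :
  cont_on a (interval s t) -> cont_on b (interval s t) -> a t = b t ->
  (forall ep, 0 < ep -> exists e, s <= e < t /\ t - ep < e /\ a e = b e /\
     ~ path_homotopic a b e t) ->
  aw X (a t).
Proof.
  intros Ca Cb Et Bad.
  destruct (choice (fun n e => s <= e < t /\ t - / INR (S n) < e /\ a e = b e /\
                               ~ path_homotopic a b e t)) as [g Hg].
  { intros n; apply Bad, Rinv_0_lt_compat, lt_0_INR; lia. }
  apply (aw_of_nonhomotopic_shrinking (a t) (fun _ => a) (fun _ => b) g (fun _ => t)).
  - intros n; apply Hg.
  - intros n; apply (cont_on_subset a _ _ Ca); unfold interval; intros; destruct (Hg n); lra.
  - intros n; apply (cont_on_subset b _ _ Cb); unfold interval; intros; destruct (Hg n); lra.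
  - intros n; apply Hg.
  - intros n; split; auto.
  - intros n; apply Hg.
  - intros U HU Ux.
    assert (Hs : s <= t) by (destruct (Hg 0%nat); lra).
    destruct (Ca U HU t ltac:(unfold interval; lra) Ux) as [da [Hda Ka]].
    rewrite Et in Ux; destruct (Cb U HU t ltac:(unfold interval; lra) Ux) as [db [Hdb Kb]].
    destruct (inv_INR_S_small (Rmin da db)) as [N HN]; [apply Rmin_glb_lt; assumption |].
    exists N; intros n Hn y Hy; specialize (HN n Hn); destruct (Hg n) as [Hgn [Hgt _]].
    pose proof (Rmin_l da db); pose proof (Rmin_r da db).
    split; [apply Ka | apply Kb]; unfold interval; solve_abs.
Qed.

Lemma aw_of_nonhomotopic_right (a b : R -> X) t u :
  cont_on a (interval t u) -> cont_on b (interval t u) -> a t = b t ->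
  (forall ep, 0 < ep -> exists f, t < f <= u /\ f < t + ep /\ a f = b f /\
     ~ path_homotopic a b t f) ->
  aw X (a t).
Proof.
  intros Ca Cb Et Bad; rewrite <- (Ropp_involutive t).
  apply (aw_of_nonhomotopic_left (fun x => a (- x)) (fun x => b (- x)) (- u) (- t)).
  - apply (cont_on_comp a (fun x => - x) (interval t u)); [exact Ca | continuity2 |].
    unfold interval; intros; lra.
  - apply (cont_on_comp b (fun x => - x) (interval t u)); [exact Cb | continuity2 |].
    unfold interval; intros; lra.
  - rewrite Ropp_involutive; exact Et.
  - intros ep Hep; destruct (Bad ep Hep) as [f [Hf [Hft [Ef Nh]]]].
    exists (- f); rewrite !Ropp_involutive; split; [lra | split; [lra | split; [exact Ef |]]].
    intros Hh; apply Nh, path_homotopic_of_reflect; [exact Hh | lra].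
Qed.

End WildPoints.

Lemma not_closure_R_sep (A : R -> Prop) x :
  ~ closure_R A x -> exists e, 0 < e /\ forall y, A y -> e <= Rabs (y - x).
Proof.
  intros Hn; apply NNPP; intros Hne; apply Hn; intros e He.
  apply NNPP; intros Hy; apply Hne; exists e; split; [exact He |]; intros y Ay.
  apply Rnot_lt_le; intros Hlt; apply Hy; exists y; auto.
Qed.

Lemma nowhere_dense_subset (A B : R -> Prop) :
  nowhere_dense A -> (forall x, B x -> A x) -> nowhere_dense B.
Proof.
  intros ND Sub [x [e [He All]]]; apply ND; exists x, e; split; [exact He |].
  intros y Hy ep Hep; destruct (All y Hy ep Hep) as [z [Bz Hz]]; exists z; auto.
Qed.

(* A component of [0,1] minus a closed set containing 0 and 1 is bounded by points of
   that set: otherwise it could be extended past its endpoint. *)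
Lemma component_endpoints (S : R -> Prop) c d : closed_R S -> S 0 -> S 1 -> c < d ->
  is_component (fun x => 0 <= x <= 1 /\ ~ S x) (fun x => c < x < d) ->
  0 <= c /\ d <= 1 /\ S c /\ S d.
Proof.
  intros Cl S0 S1 Hcd [_ [Sub [_ Max]]].
  assert (Hc : 0 <= c).
  { apply Rnot_lt_le; intros Hc; pose proof (Rmin_l d 0); pose proof (Rmin_r d 0).
    assert (c < Rmin d 0) by (apply Rmin_glb_lt; lra).
    destruct (Sub ((c + Rmin d 0) / 2)) as [[Hy _] _]; lra. }
  assert (Hd : d <= 1).
  { apply Rnot_lt_le; intros Hd; pose proof (Rmax_l c 1); pose proof (Rmax_r c 1).
    assert (Rmax c 1 < d) by (apply Rmax_lub_lt; lra).
    destruct (Sub ((d + Rmax c 1) / 2)) as [[_ Hy] _]; lra. }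
  split; [exact Hc | split; [exact Hd | split]].
  - apply NNPP; intros Nc; assert (c <> 0) by (intros ->; auto).
    destruct (not_closure_R_sep S c (fun K => Nc (Cl c K))) as [e [He Ke]].
    pose proof (Rmin_l e c); pose proof (Rmin_r e c); set (e' := Rmin e c) in *.
    assert (0 < e') by (apply Rmin_glb_lt; lra).
    assert (c < c - e' / 4 < d); [| lra].
    apply (Max (fun x => c - e' / 2 < x < d)); [intros; lra | | intros; lra | lra].
    intros x Hx; destruct (Rlt_or_le c x); [apply Sub; lra |].
    split; [lra |]; intros Sx; specialize (Ke x Sx); solve_abs.
  - apply NNPP; intros Nd; assert (d <> 1) by (intros ->; auto).
    destruct (not_closure_R_sep S d (fun K => Nd (Cl d K))) as [e [He Ke]].
    pose proof (Rmin_l e (1 - d)); pose proof (Rmin_r e (1 - d)); set (e' := Rmin e (1 - d)) in *.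
    assert (0 < e') by (apply Rmin_glb_lt; lra).
    assert (c < d + e' / 4 < d); [| lra].
    apply (Max (fun x => c < x < d + e' / 2)); [intros; lra | | intros; lra | lra].
    intros x Hx; destruct (Rlt_or_le x d); [apply Sub; lra |].
    split; [lra |]; intros Sx; specialize (Ke x Sx); solve_abs.
Qed.

Lemma component_of_gap (S : R -> Prop) l r : l < r -> S l -> S r -> 0 <= l -> r <= 1 ->
  (forall y, l < y < r -> ~ S y) -> is_component (fun x => 0 <= x <= 1 /\ ~ S x) (fun x => l < x < r).
Proof.
  intros Hlr Sl Sr H0 H1 Gap; split; [exists ((l + r) / 2); lra |]; split.
  { intros x Hx; split; [lra | apply Gap, Hx]. }
  split; [intros; lra |]; intros C' Inc Sub Conv x Cx.
  assert (Cm : C' ((l + r) / 2)) by (apply Inc; lra).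
  split; apply Rnot_le_lt; intros Hx.
  - apply (Sub l); [apply (Conv x l ((l + r) / 2)); auto; lra | exact Sl].
  - apply (Sub r); [apply (Conv ((l + r) / 2) r x); auto; lra | exact Sr].
Qed.

Lemma closed_first_point_after (S : R -> Prop) t q : closed_R S -> S q -> t < q ->
  (exists e, 0 < e /\ forall y, S y -> t < y -> t + e <= y) ->
  exists g, S g /\ t < g <= q /\ forall y, t < y < g -> ~ S y.
Proof.
  intros Cl Sq Hq [e [He Ke]].
  destruct (completeness (fun z => forall y, S y -> t < y -> z <= y)) as [g [Ub Lub]].
  { exists q; intros z Hz; apply Hz; auto. }
  { exists (t + e); intros y Sy Hy; apply Ke; auto. }
  assert (Hge : t + e <= g) by (apply Ub; intros y Sy Hy; apply Ke; auto).
  assert (Low : forall y, S y -> t < y -> g <= y)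
    by (intros y Sy Hy; apply Lub; intros z Hz; apply Hz; auto).
  exists g; split; [| split; [split; [lra | apply Low; auto] |]].
  - apply Cl; intros ep Hep; apply NNPP; intros Hn.
    assert (g + ep <= g); [| lra].
    apply Ub; intros y Sy Hy; specialize (Low y Sy Hy).
    apply Rnot_lt_le; intros Hlt; apply Hn; exists y; split; [exact Sy | solve_abs].
  - intros y Hy Sy; specialize (Low y Sy ltac:(lra)); lra.
Qed.

Lemma closed_last_point_before (S : R -> Prop) p x : closed_R S -> S p -> p <= x ->
  exists l, S l /\ p <= l <= x /\ forall y, l < y <= x -> ~ S y.
Proof.
  intros Cl Sp Hp.
  destruct (completeness (fun y => S y /\ p <= y <= x)) as [l [Ub Lub]].
  { exists x; intros z Hz; apply Hz. }
  { exists p; split; [exact Sp | lra]. }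
  assert (Hl1 : p <= l) by (apply Ub; split; [exact Sp | lra]).
  assert (Hl2 : l <= x) by (apply Lub; intros z Hz; apply Hz).
  exists l; split; [| split; [lra |]].
  - apply Cl; intros ep Hep; apply NNPP; intros Hn.
    assert (l <= l - ep); [| lra].
    apply Lub; intros z [Sz Hz]; apply Rnot_lt_le; intros Hlt; apply Hn; exists z.
    assert (z <= l) by (apply Ub; split; auto); split; [exact Sz | solve_abs].
  - intros y Hy Sy; assert (y <= l) by (apply Ub; split; [exact Sy | lra]); lra.
Qed.

Section IncreasingSequence.
Variable z : nat -> R.
Hypothesis z_incr : forall n, z n < z (S n).

Lemma incr_seq_lt m n : (m < n)%nat -> z m < z n.
Proof.
  induction n as [| n IH]; intros H; [lia |].
  destruct (Nat.eq_dec m n) as [-> | Ne]; [apply z_incr |].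
  apply Rlt_trans with (z n); [apply IH; lia | apply z_incr].
Qed.

Lemma incr_seq_le m n : (m <= n)%nat -> z m <= z n.
Proof.
  intros H; destruct (Nat.eq_dec m n) as [-> | Ne]; [lra |]; left; apply incr_seq_lt; lia.
Qed.

Lemma incr_seq_locate x N : z 0%nat <= x -> x < z N -> exists n, z n <= x < z (S n).
Proof.
  intros H0; induction N as [| N IH]; intros HN; [lra |].
  destruct (Rle_or_lt (z N) x); [exists N; lra | apply IH; assumption].
Qed.

Hypothesis z_0 : z 0%nat = 0.
Hypothesis z_lt_1 : forall n, z n < 1.
Hypothesis z_to_1 : forall e, 0 < e -> exists n, 1 - e < z n.

Definition seq_points : R -> Prop := fun x => x = 1 \/ exists n, x = z n.

Lemma seq_points_range x : seq_points x -> 0 <= x <= 1.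
Proof.
  intros [-> | [n ->]]; [lra |]; split; [rewrite <- z_0; apply incr_seq_le; lia | left; apply z_lt_1].
Qed.

Lemma seq_points_gap n y : z n < y < z (S n) -> ~ seq_points y.
Proof.
  intros Hy [-> | [m ->]]; [specialize (z_lt_1 (S n)); lra |].
  destruct (Compare_dec.le_lt_dec m n) as [Hm | Hm].
  - pose proof (incr_seq_le m n Hm); lra.
  - pose proof (incr_seq_le (S n) m Hm); lra.
Qed.

Lemma seq_points_closed : closed_R seq_points.
Proof.
  intros x Cx; apply NNPP; intros Nx.
  assert (Hx : 0 <= x <= 1).
  { split; apply Rnot_lt_le; intros Hx.
    - destruct (Cx (- x) ltac:(lra)) as [y [Sy Hy]]; pose proof (seq_points_range y Sy); solve_abs.
    - destruct (Cx (x - 1) ltac:(lra)) as [y [Sy Hy]]; pose proof (seq_points_range y Sy); solve_abs. }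
  assert (x <> 1) by (intros E; apply Nx; left; exact E).
  destruct (z_to_1 (1 - x) ltac:(lra)) as [N HN].
  destruct (incr_seq_locate x N ltac:(lra) ltac:(lra)) as [n [Hn1 Hn2]].
  assert (z n <> x) by (intros E; apply Nx; right; exists n; auto).
  pose proof (Rmin_l (x - z n) (z (S n) - x)); pose proof (Rmin_r (x - z n) (z (S n) - x)).
  destruct (Cx (Rmin (x - z n) (z (S n) - x))) as [y [Sy Hy]]; [apply Rmin_glb_lt; lra |].
  apply (seq_points_gap n y); [solve_abs | exact Sy].
Qed.

Lemma seq_points_scattered : scattered seq_points.
Proof.
  intros Y Sub [y0 Y0].
  destruct (classic (exists n, Y (z n))) as [Ex | Nex].
  - destruct (Wf_nat.dec_inh_nat_subset_has_unique_least_element (fun n => Y (z n))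
                (fun n => classic _) Ex) as [n [[Yn Least] _]].
    exists (z n); split; [exact Yn |]; exists (z (S n) - z n); split; [specialize (z_incr n); lra |].
    intros w Yw Hw; destruct (Sub w Yw) as [-> | [m ->]].
    + specialize (z_lt_1 (S n)); solve_abs.
    + specialize (Least m Yw); destruct (Nat.eq_dec m n) as [-> | Ne]; [reflexivity |].
      pose proof (incr_seq_le (S n) m ltac:(lia)); solve_abs.
  - exists y0; split; [exact Y0 |]; exists 1; split; [lra |]; intros w Yw _.
    destruct (Sub w Yw) as [-> | [m ->]]; [| exfalso; apply Nex; exists m; exact Yw].
    destruct (Sub y0 Y0) as [-> | [m ->]]; [reflexivity | exfalso; apply Nex; exists m; exact Y0].
Qed.

Lemma seq_points_nowhere_dense : nowhere_dense seq_points.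
Proof.
  intros [x [e [He All]]].
  assert (In : forall y, Rabs (y - x) < e -> seq_points y)
    by (intros y Hy; apply seq_points_closed, All, Hy).
  assert (Hx : x + e / 2 <= 1) by (apply (seq_points_range _ (In (x + e / 2) ltac:(solve_abs)))).
  destruct (In (x - e / 2) ltac:(solve_abs)) as [E | [n En]]; [lra |].
  pose proof (z_incr n); pose proof (Rmin_l (e / 2) (z (S n) - z n));
    pose proof (Rmin_r (e / 2) (z (S n) - z n)).
  assert (0 < Rmin (e / 2) (z (S n) - z n)) by (apply Rmin_glb_lt; lra).
  apply (seq_points_gap n (z n + Rmin (e / 2) (z (S n) - z n) / 2)); [lra |].
  apply In; solve_abs.
Qed.

Lemma seq_points_component c d : c < d ->
  is_component (fun x => 0 <= x <= 1 /\ ~ seq_points x) (fun x => c < x < d) ->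
  exists n, c = z n /\ d = z (S n).
Proof.
  intros Hcd Comp.
  destruct (component_endpoints seq_points c d seq_points_closed
              (or_intror (ex_intro _ 0%nat (eq_sym z_0))) (or_introl eq_refl) Hcd Comp)
    as [_ [Hd [[-> | [n ->]] Sd]]]; [lra |].
  exists n; split; [reflexivity |].
  destruct Comp as [_ [Sub _]].
  destruct (Rtotal_order d (z (S n))) as [Lt | [Eq | Gt]]; [| exact Eq |].
  - exfalso; apply (seq_points_gap n d); [lra | exact Sd].
  - exfalso; apply (Sub (z (S n))); [split; [apply z_incr | exact Gt] |].
    right; exists (S n); reflexivity.
Qed.

End IncreasingSequence.

Section SequenceProducts.
Context {X : TopSpace}.
Variable Hx : well_defined_scattered_products X.

(* The points [z n] together with their limit 1 form a scattered homotopy cut-set. *)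
Lemma path_homotopic_of_seq_01 (a b : R -> X) (z : nat -> R) :
  is_path a 0 1 -> is_path b 0 1 -> z 0%nat = 0 -> (forall n, z n < z (S n)) ->
  (forall n, z n < 1) -> (forall e, 0 < e -> exists n, 1 - e < z n) ->
  (forall n, path_homotopic a b (z n) (z (S n))) -> a 1 = b 1 ->
  path_homotopic a b 0 1.
Proof.
  intros Pa Pb z0 zinc z1 zconv Hz E1.
  apply Hx; [exact Pa | exact Pb |]; exists (seq_points z); split; [apply seq_points_scattered; auto |].
  split; [apply seq_points_range; auto |].
  split; [apply seq_points_closed; auto |].
  split; [apply seq_points_nowhere_dense; auto |].
  split; [right; exists 0%nat; auto |].
  split; [left; reflexivity |].
  split.
  - intros x [-> | [n ->]]; [exact E1 |].
    apply (path_homotopic_endpoints a b _ _ (Hz n)); left; apply zinc.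
  - intros c d Hcd Comp; destruct (seq_points_component z zinc z0 z1 zconv c d Hcd Comp) as [n [-> ->]].
    apply Hz.
Qed.

Lemma path_homotopic_of_seq (a b : R -> X) (z : nat -> R) s t :
  s < t -> cont_on a (interval s t) -> cont_on b (interval s t) ->
  z 0%nat = s -> (forall n, z n < z (S n)) -> (forall n, z n < t) ->
  (forall e, 0 < e -> exists n, t - e < z n) ->
  (forall n, path_homotopic a b (z n) (z (S n))) -> a t = b t ->
  path_homotopic a b s t.
Proof.
  intros Hst Ca Cb z0 zinc zt zconv Hz Et.
  set (lam := fun x => s + x * (t - s)); set (w := fun n => (z n - s) / (t - s)).
  assert (Ew : forall n, lam (w n) = z n) by (intros; unfold lam, w; field; lra).
  assert (Rlam : forall x, 0 <= x <= 1 -> s <= lam x <= t) by (intros; unfold lam; split; nra).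
  assert (Lt : forall p q, p < q -> (p - s) / (t - s) < (q - s) / (t - s))
    by (intros; apply Rmult_lt_compat_r; [apply Rinv_0_lt_compat |]; lra).
  apply path_homotopic_of_rescaled; [exact Hst |].
  apply (path_homotopic_of_seq_01 _ _ w).
  - split; [lra |]; apply (cont_on_comp a lam (interval s t) _ Ca); [continuity2 | exact Rlam].
  - split; [lra |]; apply (cont_on_comp b lam (interval s t) _ Cb); [continuity2 | exact Rlam].
  - unfold w; rewrite z0; unfold Rdiv; ring.
  - intros n; apply Lt, zinc.
  - intros n; replace 1 with ((t - s) / (t - s)) by (field; lra); apply Lt, zt.
  - intros e He; destruct (zconv (e * (t - s))) as [n Hn]; [nra |]; exists n.
    replace (1 - e) with ((t - e * (t - s) - s) / (t - s)) by (field; lra); apply Lt, Hn.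
  - intros n; apply (path_homotopic_precomp a b lam (z n) (z (S n)));
      [apply Hz | continuity2 | | apply Ew | apply Ew].
    intros x Hx'; rewrite <- (Ew n), <- (Ew (S n)); unfold lam; pose proof (Lt _ _ (zinc n)); split; nra.
  - unfold lam; replace (s + 1 * (t - s)) with t by ring; exact Et.
Qed.

End SequenceProducts.

(* Starting from [p], step to the chosen point [f] beyond the previous term and beyond
   [d - 1/(n+1)]; if [f x] always lies in [(x, d)], this climbs to [d]. *)
Fixpoint climb_seq (f : R -> R) (p d : R) (n : nat) : R :=
  match n with
  | O => p
  | S m => f (Rmax (climb_seq f p d m) (d - / INR (S m)))
  end.

Lemma climb_seq_spec (A0 : R -> Prop) (f : R -> R) p d : A0 p -> p < d ->
  (forall x, x < d -> A0 (f x) /\ x < f x < d) ->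
  forall n, (A0 (climb_seq f p d n) /\ p <= climb_seq f p d n < d) /\
            climb_seq f p d n < climb_seq f p d (S n) /\ d - / INR (S n) < climb_seq f p d (S n).
Proof.
  intros Ap Hpd Hf.
  assert (Step : forall n, p <= climb_seq f p d n < d ->
            A0 (climb_seq f p d (S n)) /\ climb_seq f p d n < climb_seq f p d (S n) < d /\
            d - / INR (S n) < climb_seq f p d (S n)).
  { intros n Hn.
    change (climb_seq f p d (S n)) with (f (Rmax (climb_seq f p d n) (d - / INR (S n)))).
    pose proof (Rinv_0_lt_compat (INR (S n)) (lt_0_INR _ (Nat.lt_0_succ n))).
    pose proof (Rmax_l (climb_seq f p d n) (d - / INR (S n))).
    pose proof (Rmax_r (climb_seq f p d n) (d - / INR (S n))).
    destruct (Hf (Rmax (climb_seq f p d n) (d - / INR (S n)))) as [Af Hfx];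
      [apply Rmax_lub_lt; lra |].
    repeat split; auto; lra. }
  assert (Inv : forall n, A0 (climb_seq f p d n) /\ p <= climb_seq f p d n < d).
  { induction n as [| n [Sn Hn]]; [simpl; split; [exact Ap | lra] |].
    destruct (Step n Hn) as [S' H']; split; [exact S' | lra]. }
  intros n; destruct (Inv n) as [Sn Hn]; destruct (Step n Hn) as [_ [H1 H2]].
  split; [split; assumption | split; [lra | exact H2]].
Qed.

Lemma closed_R_reflect (A : R -> Prop) : closed_R A -> closed_R (fun x => A (- x)).
Proof.
  intros Cl x Cx; apply Cl; intros e He; destruct (Cx e He) as [y [Ay Hy]].
  exists (- y); split; [exact Ay |]; replace (- y - - x) with (- (y - x)) by ring.
  rewrite Rabs_Ropp; exact Hy.
Qed.

Section PiecewiseHomotopies.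
Context {X : TopSpace}.
Variable Hx : well_defined_scattered_products X.

(* If [d] is a limit of [A0] from the left, the homotopies along an increasing
   sequence of points of [A0] tending to [d] combine by scattered products;
   otherwise [d] is reached through the last gap of [A0] before it. *)
Lemma path_homotopic_of_left_pieces (A0 : R -> Prop) (a b : R -> X) p d :
  closed_R A0 -> A0 p -> A0 d -> p < d ->
  cont_on a (interval p d) -> cont_on b (interval p d) -> a d = b d ->
  (forall x y, A0 x -> A0 y -> p <= x <= y -> y < d -> path_homotopic a b x y) ->
  (forall l r, A0 l -> A0 r -> p <= l -> l < r -> r <= d ->
     (forall y, l < y < r -> ~ A0 y) -> path_homotopic a b l r) ->
  path_homotopic a b p d.
Proof.
  intros Cl Ap Ad Hpd Ca Cb Ed Pieces Gap.
  destruct (classic (forall x, x < d -> exists y, A0 y /\ x < y < d)) as [Acc | NAcc].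
  - destruct (choice (fun x y => x < d -> A0 y /\ x < y < d)) as [f Hf].
    { intros x; destruct (Rlt_dec x d) as [Hl | Hl];
        [destruct (Acc x Hl) as [y Hy]; exists y; auto | exists 0; intros; contradiction]. }
    pose proof (climb_seq_spec A0 f p d Ap Hpd Hf) as Z.
    apply (path_homotopic_of_seq Hx a b (climb_seq f p d) p d Hpd Ca Cb eq_refl); [| | | | exact Ed].
    + intros n; apply (Z n).
    + intros n; apply (Z n).
    + intros e He; destruct (archimed_cor1 e He) as [N [HN1 HN2]]; exists N.
      destruct N as [| N]; [lia |]; destruct (Z N) as [_ [_ HZ]]; lra.
    + intros n; destruct (Z n) as [[S1 H1] [H2 _]], (Z (S n)) as [[S2 H3] _].
      apply Pieces; auto; lra.
  - apply not_all_ex_not in NAcc; destruct NAcc as [x Nx]; apply imply_to_and in Nx.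
    destruct Nx as [Hxd Nx].
    destruct (closed_last_point_before A0 p (Rmax x p) Cl Ap (Rmax_r x p)) as [l [Al [Hl Gl]]].
    pose proof (Rmax_l x p); assert (Rmax x p < d) by (apply Rmax_lub_lt; lra).
    apply path_homotopic_concat with l; [lra | lra | apply Pieces; auto; lra |].
    apply Gap; [exact Al | exact Ad | lra | lra | lra |]; intros y Hy Ay.
    destruct (Rle_or_lt y (Rmax x p)); [apply (Gl y); auto; lra |].
    apply Nx; exists y; split; [exact Ay | lra].
Qed.

Lemma path_homotopic_of_right_pieces (A0 : R -> Prop) (a b : R -> X) c p :
  closed_R A0 -> A0 c -> A0 p -> c < p ->
  cont_on a (interval c p) -> cont_on b (interval c p) -> a c = b c ->
  (forall x y, A0 x -> A0 y -> c < x <= y -> y <= p -> path_homotopic a b x y) ->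
  (forall l r, A0 l -> A0 r -> c <= l -> l < r -> r <= p ->
     (forall y, l < y < r -> ~ A0 y) -> path_homotopic a b l r) ->
  path_homotopic a b c p.
Proof.
  intros Cl Ac Ap Hcp Ca Cb Ec Pieces Gap.
  assert (Reflect : forall x y, path_homotopic a b (- y) (- x) ->
            path_homotopic (fun z => a (- z)) (fun z => b (- z)) x y).
  { intros x y H; apply path_homotopic_reflect in H; rewrite !Ropp_involutive in H; exact H. }
  apply path_homotopic_of_reflect; [| lra].
  apply (path_homotopic_of_left_pieces (fun x => A0 (- x))); rewrite ?Ropp_involutive;
    [apply closed_R_reflect, Cl | exact Ap | exact Ac | lra | | | exact Ec | |].
  - apply (cont_on_comp a (fun x => - x) (interval c p)); [exact Ca | continuity2 |].
    unfold interval; intros; lra.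
  - apply (cont_on_comp b (fun x => - x) (interval c p)); [exact Cb | continuity2 |].
    unfold interval; intros; lra.
  - intros x y Ax Ay Hxy Hy; apply Reflect, Pieces; auto; lra.
  - intros l r Al Ar Hl Hlr Hr G; apply Reflect, Gap; auto; try lra.
    intros y Hy Ay; apply (G (- y)); [lra | rewrite Ropp_involutive; exact Ay].
Qed.

End PiecewiseHomotopies.

Section EssentialPoints.
Context {X : TopSpace}.

Definition homotopic_near (a b : R -> X) (A : R -> Prop) (t : R) : Prop :=
  exists ep, 0 < ep /\ forall e f, A e -> A f -> t - ep < e -> e <= f -> f < t + ep ->
    path_homotopic a b e f.

Definition essential_points (a b : R -> X) (A : R -> Prop) : R -> Prop :=
  fun t => A t /\ ~ (0 < t < 1 /\ homotopic_near a b A t).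

Lemma essential_points_closed (a b : R -> X) (A : R -> Prop) :
  closed_R A -> closed_R (essential_points a b A).
Proof.
  intros Cl x Cx.
  assert (Ax : A x) by (apply Cl; intros e He; destruct (Cx e He) as [y [[Ay _] Hy]]; exists y; auto).
  split; [exact Ax |]; intros [Hx01 [ep [Hep Near]]].
  set (dl := Rmin (ep / 2) (Rmin x (1 - x))).
  pose proof (Rmin_l (ep / 2) (Rmin x (1 - x))); pose proof (Rmin_r (ep / 2) (Rmin x (1 - x))).
  pose proof (Rmin_l x (1 - x)); pose proof (Rmin_r x (1 - x)).
  assert (Hdl : 0 < dl) by (apply Rmin_glb_lt; [lra | apply Rmin_glb_lt; lra]).
  destruct (Cx dl Hdl) as [y [[Ay Ny] Hy]]; apply Ny.
  assert (- dl < y - x < dl) by solve_abs.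
  split; [unfold dl in *; lra |]; exists (ep / 2); split; [lra |].
  intros e f Ae Af He Hef Hf; apply Near; auto; unfold dl in *; lra.
Qed.

Lemma homotopic_near_of_sides (a b : R -> X) (A : R -> Prop) t eL eR : 0 < eL -> 0 < eR ->
  (forall e, A e -> t - eL < e <= t -> path_homotopic a b e t) ->
  (forall f, A f -> t <= f < t + eR -> path_homotopic a b t f) ->
  homotopic_near a b A t.
Proof.
  intros HeL HeR Left Right; exists (Rmin eL eR); split; [apply Rmin_glb_lt; assumption |].
  pose proof (Rmin_l eL eR); pose proof (Rmin_r eL eR).
  intros e f Ae Af He Hef Hf.
  destruct (Rle_or_lt f t) as [Hft | Hft]; [| destruct (Rle_or_lt t e) as [Hte | Hte]].
  - apply (path_homotopic_cancel_right a b e f t); auto; apply Left; auto; lra.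
  - apply (path_homotopic_cancel_left a b t e f); auto; try lra; apply Right; auto; lra.
  - apply path_homotopic_concat with t; [lra | lra | apply Left | apply Right]; auto; lra.
Qed.

Lemma htpy_cut_set_gap (a b : R -> X) (A : R -> Prop) l r : htpy_cut_set a b 0 1 A ->
  A l -> A r -> l < r -> (forall y, l < y < r -> ~ A y) -> path_homotopic a b l r.
Proof.
  intros [Sub [_ [_ [_ [_ [_ Comp]]]]]] Al Ar Hlr Gap.
  apply Comp; [exact Hlr |].
  apply component_of_gap; auto; [apply (Sub l Al) | apply (Sub r Ar)].
Qed.

Variable Hx : well_defined_scattered_products X.
Variables (a b : R -> X) (A : R -> Prop).
Hypothesis Pa : is_path a 0 1.
Hypothesis Pb : is_path b 0 1.
Hypothesis HA : htpy_cut_set a b 0 1 A.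

Let A_sub : forall x, A x -> 0 <= x <= 1 := proj1 HA.
Let A_closed : closed_R A := proj1 (proj2 HA).
Let A_eq : forall x, A x -> a x = b x := proj1 (proj2 (proj2 (proj2 (proj2 (proj2 HA))))).

(* A supremum argument: the points [x] of [A] reachable from [p] by a homotopy on
   [[p, x]] cannot stop before [q], since every point in between is inessential. *)
Lemma path_homotopic_between_inessential c d :
  (forall y, c < y < d -> ~ essential_points a b A y) ->
  forall p q, A p -> A q -> c < p -> p <= q -> q < d -> path_homotopic a b p q.
Proof.
  intros NB p q Ap Aq Hcp Hpq Hqd.
  set (T := fun x => A x /\ p <= x <= q /\ path_homotopic a b p x).
  assert (Tp : T p) by (split; [exact Ap | split; [lra | apply path_homotopic_point, A_eq, Ap]]).
  destruct (completeness T) as [s [Ub Lub]]; [exists q; intros z Tz; apply Tz | exists p; exact Tp |].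
  assert (Hps : p <= s) by (apply Ub, Tp).
  assert (Hsq : s <= q) by (apply Lub; intros z Tz; apply Tz).
  assert (Approx : forall e, 0 < e -> exists x, T x /\ s - e < x <= s).
  { intros e He; apply NNPP; intros Hn; assert (s <= s - e); [| lra].
    apply Lub; intros z Tz; apply Rnot_lt_le; intros Hz; apply Hn.
    exists z; split; [exact Tz | split; [lra | apply Ub, Tz]]. }
  assert (As : A s).
  { apply A_closed; intros e He; destruct (Approx e He) as [x [[Ax _] Hx']].
    exists x; split; [exact Ax | solve_abs]. }
  assert (Near : homotopic_near a b A s)
    by (apply NNPP; intros Hn; apply (NB s); [lra | split; [exact As | intros [_ K]; contradiction]]).
  destruct Near as [ep [Hep Near]].
  assert (Hs : path_homotopic a b p s).
  { destruct (Approx ep Hep) as [x [[Ax [Hx1 Hpx]] Hx2]].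
    apply path_homotopic_concat with x; [lra | lra | exact Hpx | apply Near; auto; lra]. }
  destruct (Req_dec s q) as [<- | Hne]; [exact Hs | exfalso].
  assert (Next : exists f, A f /\ s < f <= q /\ path_homotopic a b s f).
  { destruct (classic (exists f, A f /\ s < f < s + ep /\ f <= q)) as [[f [Af [Hf1 Hf2]]] | Nf].
    - exists f; split; [exact Af | split; [lra | apply Near; auto; lra]].
    - destruct (closed_first_point_after A s q A_closed Aq ltac:(lra)) as [g [Ag [Hg Gap]]].
      { pose proof (Rmin_l ep (q - s)); pose proof (Rmin_r ep (q - s)).
        exists (Rmin ep (q - s)); split; [apply Rmin_glb_lt; lra |]; intros y Ay Hy.
        apply Rnot_lt_le; intros Hlt; apply Nf; exists y; split; [exact Ay | lra]. }
      exists g; split; [exact Ag | split; [exact Hg | apply (htpy_cut_set_gap a b A); auto; lra]]. }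
  destruct Next as [f [Af [Hf Hsf]]].
  assert (f <= s); [| lra].
  apply Ub; split; [exact Af | split; [lra | apply path_homotopic_concat with s; auto; lra]].
Qed.

Lemma essential_points_component c d : c < d ->
  is_component (fun x => 0 <= x <= 1 /\ ~ essential_points a b A x) (fun x => c < x < d) ->
  path_homotopic a b c d.
Proof.
  intros Hcd Comp.
  assert (B0 : essential_points a b A 0) by (split; [apply HA | lra]).
  assert (B1 : essential_points a b A 1) by (split; [apply HA | lra]).
  destruct (component_endpoints _ c d (essential_points_closed a b A A_closed) B0 B1 Hcd Comp)
    as [Hc [Hd [[Ac _] [Ad _]]]].
  destruct Comp as [_ [Sub _]].
  pose proof (path_homotopic_between_inessential c d (fun y Hy => proj2 (Sub y Hy))) as Inner.
  assert (Ca : forall s t, 0 <= s -> t <= 1 -> cont_on a (interval s t))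
    by (intros; apply (cont_on_subset a _ _ (proj2 Pa)); unfold interval; intros; lra).
  assert (Cb : forall s t, 0 <= s -> t <= 1 -> cont_on b (interval s t))
    by (intros; apply (cont_on_subset b _ _ (proj2 Pb)); unfold interval; intros; lra).
  destruct (classic (exists p, A p /\ c < p < d)) as [[p [Ap Hp]] | Np].
  - apply path_homotopic_concat with p; [lra | lra | |].
    + apply (path_homotopic_of_right_pieces Hx A);
        [exact A_closed | exact Ac | exact Ap | lra | apply Ca | apply Cb | apply A_eq, Ac | |]; try lra.
      * intros x y Ax Ay Hxy Hy; apply Inner; auto; lra.
      * intros l r Al Ar _ Hlr _ Gap; apply (htpy_cut_set_gap a b A); auto.
    + apply (path_homotopic_of_left_pieces Hx A);
        [exact A_closed | exact Ap | exact Ad | lra | apply Ca | apply Cb | apply A_eq, Ad | |]; try lra.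
      * intros x y Ax Ay Hxy Hy; apply Inner; auto; lra.
      * intros l r Al Ar _ Hlr _ Gap; apply (htpy_cut_set_gap a b A); auto.
  - apply (htpy_cut_set_gap a b A); auto; intros y Hy Ay; apply Np; exists y; auto.
Qed.

Lemma essential_points_aw t : essential_points a b A t -> 0 < t < 1 -> aw X (a t).
Proof.
  intros [At Ness] Ht; apply NNPP; intros Naw; apply Ness; split; [exact Ht |].
  assert (Ca : forall s u, 0 <= s -> u <= 1 -> cont_on a (interval s u))
    by (intros; apply (cont_on_subset a _ _ (proj2 Pa)); unfold interval; intros; lra).
  assert (Cb : forall s u, 0 <= s -> u <= 1 -> cont_on b (interval s u))
    by (intros; apply (cont_on_subset b _ _ (proj2 Pb)); unfold interval; intros; lra).
  apply NNPP; intros Nnear.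
  destruct (classic (exists eL, 0 < eL /\ forall e, A e -> t - eL < e <= t -> path_homotopic a b e t))
    as [[eL [HeL Left]] | NL].
  - destruct (classic (exists eR, 0 < eR /\ forall f, A f -> t <= f < t + eR -> path_homotopic a b t f))
      as [[eR [HeR Right]] | NR].
    + exact (Nnear (homotopic_near_of_sides a b A t eL eR HeL HeR Left Right)).
    + apply Naw, (aw_of_nonhomotopic_right a b t 1); [apply Ca | apply Cb | apply A_eq, At |]; try lra.
      intros ep Hep; apply NNPP; intros Nf; apply NR; exists ep; split; [exact Hep |].
      intros f Af Hf; apply NNPP; intros Nh.
      destruct (Req_dec f t) as [-> | Hne]; [apply Nh, path_homotopic_point, A_eq, At |].
      apply Nf; exists f; pose proof (A_sub f Af).
      split; [lra | split; [lra | split; [apply A_eq, Af | exact Nh]]].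
  - apply Naw, (aw_of_nonhomotopic_left a b 0 t); [apply Ca | apply Cb | apply A_eq, At |]; try lra.
    intros ep Hep; apply NNPP; intros Ne; apply NL; exists ep; split; [exact Hep |].
    intros e Ae He; apply NNPP; intros Nh.
    destruct (Req_dec e t) as [-> | Hne]; [apply Nh, path_homotopic_point, A_eq, At |].
    apply Ne; exists e; pose proof (A_sub e Ae).
    split; [lra | split; [lra | split; [apply A_eq, Ae | exact Nh]]].
Qed.

End EssentialPoints.

Theorem mainTheorem14 (X : TopSpace) (Hx : well_defined_scattered_products X)
  (a b : R -> X) (A : R -> Prop) :
  is_path a 0 1 -> is_path b 0 1 -> htpy_cut_set a b 0 1 A ->
  exists B : R -> Prop,
    (forall x, B x -> A x) /\ htpy_cut_set a b 0 1 B /\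
    (forall y, image a (fun x => B x /\ 0 < x < 1) y <->
               image b (fun x => B x /\ 0 < x < 1) y) /\
    (forall y, image a (fun x => B x /\ 0 < x < 1) y -> aw X y).
Proof.
  intros Pa Pb HA; pose proof HA as [Sub [Cl [ND [A0 [A1 [Eq _]]]]]].
  exists (essential_points a b A).
  assert (Sub' : forall x, essential_points a b A x -> A x) by (intros x [Ax _]; exact Ax).
  assert (Eq' : forall x, essential_points a b A x -> a x = b x) by (intros x Bx; apply Eq, Sub', Bx).
  split; [exact Sub' | split; [| split]].
  - split; [intros x Bx; apply Sub, Sub', Bx |].
    split; [apply essential_points_closed, Cl |].
    split; [apply (nowhere_dense_subset A _ ND Sub') |].
    split; [split; [exact A0 | lra] |].
    split; [split; [exact A1 | lra] |].
    split; [exact Eq' |].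
    intros c d Hcd Comp; apply (essential_points_component Hx a b A Pa Pb HA c d Hcd Comp).
  - intros y; split; intros [x [Bx <-]]; exists x; split; try exact Bx.
    + symmetry; apply Eq', Bx.
    + apply Eq', Bx.
  - intros y [x [[Bx Hx01] <-]]; apply (essential_points_aw a b A Pa Pb HA x Bx Hx01).
Qed.
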